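(* Let $\{(G_n,r_n),g_n^{n+1}\}$ be an inverse sequence of cellular graphs with inverse limit $G_\infty$. Consider the statements: (1) for each $i\in\mathbb{N}$, the relation $r_i$ is an equivalence relation on $G_i$; (2) for each thread $\bar x=(x_n)\in G_\infty$ and each $i\in\mathbb{N}$ there exists $j\ge i$ such that $g_i^j\big(B(x_j,2r_j)\big)\subset B(x_i,r_i)$; (3) $\{(G_n,r_n),g_n^{n+1}\}$ is a g-cell structure. Then (1) implies (2), and (2) implies (3).
   Context: A cellular graph is a pair $(G,r)$ where $G$ is a nonempty topological space and $r\subset G\times G$ is a reflexive and symmetric relation. For $u\in G$, $B(u,r)=\{v\in G:(u,v)\in r\}$, and for $A\subset G$, $B(A,r)=\bigcup_{a\in A}B(a,r)$. The relation $2r$ is $\{(x,z):\exists y\in G,\ (x,y)\in r,\ (y,z)\in r\}$. An inverse sequence of cellular graphs $\{(G_n,r_n),g_n^{n+1}\}$ consists of cellular graphs $(G_n,r_n)$, $n\in\mathbb{N}=\{1,2,\dots\}$, and continuous maps $g_n^{n+1}:G_{n+1}\to G_n$ such that $(g_n^{n+1}(x),g_n^{n+1}(y))\in r_n$ whenever $(x,y)\in r_{n+1}$; one sets $g_n^n=\mathrm{id}$ and $g_n^l=g_n^{n+1}\circ\cdots\circ g_{l-1}^{l}$ for $n<l$. Its inverse limit is $G_\infty=\{\bar x=(x_n)\in\prod_n G_n: g_i^j(x_j)=x_i \text{ for all } j\ge i\}$ with the subspace topology of the product topology; its elements are called threads, and $g_i:G_\infty\to G_i$ denotes the restriction of the $i$-th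 projection. The natural relation on $G_\infty$ is $r=\{(\bar x,\bar y)\in G_\infty\times G_\infty:(x_n,y_n)\in r_n \text{ for all } n\}$. The inverse sequence is a generalized cell structure (g-cell structure) if its natural relation $r$ is an equivalence relation on $G_\infty$. *)

From HB Require Import structures.
From mathcomp Require Import all_boot.
From mathcomp Require Import boolp classical_sets topology.

Unset Printing Implicit Defensive.

(* Indices: we index by nat starting at 0 instead of 1 (pure relabeling). *)

Definition cellular_graph (X : topologicalType) (r : X -> X -> Prop) : Prop :=
  (exists x : X, True) /\ (forall x, r x x) /\ (forall x y, r x y -> r y x).

Definition ball_rel (X : Type) (r : X -> X -> Prop) (u : X) : set X :=
  [set v | r u v].

Definition double_rel (X : Type) (r : X -> X -> Prop) : X -> X -> Prop :=
  fun x z => exists y, r x y /\ r y z.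

Definition inverse_seq_cg (G : nat -> topologicalType)
  (r : forall n, G n -> G n -> Prop) (g : forall n, G n.+1 -> G n) : Prop :=
  (forall n, cellular_graph (G n) (r n)) /\
  (forall n, continuous (g n)) /\
  (forall n (x y : G n.+1), r n.+1 x y -> r n (g n x) (g n y)).

(* g_i^{k+i} : G_{k+i} -> G_i (with g_i^i = id); "j >= i" is written j = k + i. *)
Fixpoint gcomp (G : nat -> topologicalType) (g : forall n, G n.+1 -> G n)
  (k i : nat) : G (k + i) -> G i :=
  match k return G (k + i) -> G i with
  | 0 => fun x => x
  | k'.+1 => fun x => gcomp G g k' i (g (k' + i) x)
  end.

Definition is_thread (G : nat -> topologicalType) (g : forall n, G n.+1 -> G n)
  (x : forall n, G n) : Prop :=
  forall i k, gcomp G g k i (x (k + i)) = x i.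

Definition inv_limit (G : nat -> topologicalType) (g : forall n, G n.+1 -> G n) :=
  {x : forall n, G n | is_thread G g x}.

Definition natural_rel (G : nat -> topologicalType)
  (r : forall n, G n -> G n -> Prop) (g : forall n, G n.+1 -> G n)
  (x y : inv_limit G g) : Prop :=
  forall n, r n (proj1_sig x n) (proj1_sig y n).

Definition is_equivalence_rel (X : Type) (R : X -> X -> Prop) : Prop :=
  (forall x, R x x) /\ (forall x y, R x y -> R y x) /\
  (forall x y z, R x y -> R y z -> R x z).

Definition g_cell_structure (G : nat -> topologicalType)
  (r : forall n, G n -> G n -> Prop) (g : forall n, G n.+1 -> G n) : Prop :=
  is_equivalence_rel (inv_limit G g) (natural_rel G r g).

(* (1) -> (2): if r_i is transitive then 2r_i = r_i as relations, so the
   ball B(x_i, 2r_i) is already contained in B(x_i, r_i); the index j = i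
   (that is, k = 0 additional steps) works for every thread.

   (2) -> (3): the natural relation on the inverse limit is always reflexive
   and symmetric, because every r_n is.  For transitivity, take threads
   x r y r z and a level i; choosing k as in (2) for x, the point z_{k+i}
   lies in B(x_{k+i}, 2 r_{k+i}) via y_{k+i}, and it is mapped by g_i^{k+i}
   to z_i since z is a thread, so z_i lies in B(x_i, r_i). *)

From mathcomp Require Import all_boot.
From mathcomp Require Import boolp classical_sets topology.
Local Open Scope classical_set_scope.

Lemma double_ball_sub (X : Type) (r : X -> X -> Prop) (u : X) :
  (forall x y z, r x y -> r y z -> r x z) ->
  ball_rel X (double_rel X r) u `<=` ball_rel X r u.
Proof. by move=> r_trans v [w [r_uw r_wv]]; exact: r_trans r_uw r_wv. Qed.

Section NaturalRelation.

Variables (G : nat -> topologicalType) (r : forall n, G n -> G n -> Prop)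
  (g : forall n, G n.+1 -> G n).

Definition double_balls_contract : Prop :=
  forall (x : inv_limit G g) i, exists k,
    gcomp G g k i @` ball_rel (G (k + i)) (double_rel (G (k + i)) (r (k + i)))
        (proj1_sig x (k + i))
      `<=` ball_rel (G i) (r i) (proj1_sig x i).

Lemma natural_rel_refl_sym :
  (forall n, cellular_graph (G n) (r n)) ->
  (forall x, natural_rel G r g x x) /\
  (forall x y, natural_rel G r g x y -> natural_rel G r g y x).
Proof.
move=> cg; split=> [x n | x y xy n]; have [_ [r_refl r_sym]] := cg n.
- exact: r_refl.
- exact: r_sym.
Qed.

Lemma natural_rel_trans :
  double_balls_contract ->
  forall x y z, natural_rel G r g x y -> natural_rel G r g y z ->
    natural_rel G r g x z.
Proof.
move=> contract x y z xy yz i.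
have [k sub_ball] := contract x i.
have z_thread : gcomp G g k i (proj1_sig z (k + i)) = proj1_sig z i :=
  proj2_sig z i k.
rewrite -z_thread; apply: sub_ball; exists (proj1_sig z (k + i)) => //.
by exists (proj1_sig y (k + i)); split; [exact: xy | exact: yz].
Qed.

End NaturalRelation.

Theorem mainTheorem1 (G : nat -> topologicalType)
  (r : forall n, G n -> G n -> Prop) (g : forall n, G n.+1 -> G n) :
  inverse_seq_cg G r g ->
  let S1 := forall i, is_equivalence_rel (G i) (r i) in
  let S2 := forall x : inv_limit G g, forall i, exists k,
      gcomp G g k i @` ball_rel (G (k + i)) (double_rel (G (k + i)) (r (k + i))) (proj1_sig x (k + i))
        `<=` ball_rel (G i) (r i) (proj1_sig x i) in
  let S3 := g_cell_structure G r g in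
  (S1 -> S2) /\ (S2 -> S3).
Proof.
move=> [cg _] S1 S2 S3; split.
- move=> equiv x i; exists 0; rewrite image_id.
  by have [_ [_ r_trans]] := equiv i; exact: double_ball_sub.
- move=> contract; have [refl sym] := natural_rel_refl_sym G r g cg.
  by split; [|split]; [exact: refl | exact: sym | exact: natural_rel_trans].
Qed.
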